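(* For integers $1\le k\le n-1$, \[ l_k(n) = \tfrac12\,|\mathrm{Epi}(P_n,P_{n-k+1})|. \]
   Context: For a positive integer $m$, $P_m$ denotes the path with vertex set $[m]=\{1,\dots,m\}$ in which $i$ and $j$ are adjacent iff $|i-j|=1$; $\mathrm{Hom}(P_n,P_r)$ is the set of maps $f:[n]\to[r]$ with $|f(i)-f(i+1)|=1$ for $1\le i\le n-1$, and $\mathrm{Epi}(P_n,P_r)=\{f\in\mathrm{Hom}(P_n,P_r): f([n])=[r]\}$. An endomorphism of $P_n$ is an element of $\mathrm{Hom}(P_n,P_n)$; it induces the partition of $[n]$ whose blocks are its nonempty fibers. Let $\mathscr C(P_n)$ be the set of partitions of $[n]$ induced by endomorphisms of $P_n$, and for $1\le k\le n-1$ let $l_k(n)=|\{\rho\in\mathscr C(P_n): \rho \text{ has exactly } n-k+1 \text{ blocks}\}|$. *)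

(* Vertex set [m] = {1..m} of P_m is modelled by 'I_m = {0..m-1}
   (shift by one; adjacency |i-j|=1 is shift invariant). *)
From mathcomp Require Import all_boot.
Set Implicit Arguments. Unset Strict Implicit. Unset Printing Implicit Defensive.

Definition is_hom (n r : nat) (f : {ffun 'I_n -> 'I_r}) : bool :=
  [forall i : 'I_n, forall j : 'I_n,
     (val j == (val i).+1) ==>
       (((val (f i)).+1 == val (f j)) || ((val (f j)).+1 == val (f i)))].

Definition Hom (n r : nat) : {set {ffun 'I_n -> 'I_r}} := [set f | is_hom f].

Definition Epi (n r : nat) : {set {ffun 'I_n -> 'I_r}} :=
  [set f in Hom n r | f @: [set: 'I_n] == [set: 'I_r]].

Definition induced_partition (n : nat) (f : {ffun 'I_n -> 'I_n}) : {set {set 'I_n}} :=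
  preim_partition f [set: 'I_n].

Definition CP (n : nat) : {set {set {set 'I_n}}} :=
  [set induced_partition f | f in Hom n n].

Definition l (k n : nat) : nat := #|[set rho in CP n | #|rho| == n - k + 1]|.

From mathcomp Require Import all_boot zify.
Set Implicit Arguments. Unset Strict Implicit. Unset Printing Implicit Defensive.

(* A homomorphism P_n -> P_r is a walk with unit steps; the partition it
   induces is the partition of [n] into its level sets.  We show that the map
   g |-> (partition induced by g) from Epi(P_n, P_r) onto the partitions of
   C(P_n) with r blocks is exactly two-to-one:
   - it is onto: an endomorphism of P_n whose image has r points takes its
     values in an interval (discrete intermediate value theorem), so shifting
     it down gives an epimorphism onto P_r with the same level sets;
   - two unit-step walks with the same level sets are translates or mirror
     images of each other, so two epimorphisms onto P_r with the same
     partition are equal or exchanged by the reflection  v |-> r - 1 - v,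
     which is a fixed-point-free involution of Epi(P_n, P_r) when r >= 2.
   The count then follows from a general lemma on two-to-one maps. *)

Definition unit_steps (F : nat -> nat) (N : nat) : Prop :=
  forall i, i.+1 < N -> F i.+1 = F i + 1 \/ F i = F i.+1 + 1.

Lemma ind2_below (N : nat) (Q : nat -> Prop) :
  Q 0 -> Q 1 -> (forall i, i.+2 < N -> Q i -> Q i.+1 -> Q i.+2) ->
  forall i, i < N -> Q i.
Proof.
move=> Q0 Q1 QS.
have pairs : forall i, i.+1 < N -> Q i /\ Q i.+1.
  elim=> [|i IH] hi; first by split.
  by have [q1 q2] := IH (ltnW hi); split=> //; apply: QS.
by case=> [|i] hi //; have [] := pairs i hi.
Qed.

(* Two unit-step walks with the same level sets are translates of each other
   (G - F constant) or mirror images (G + F constant): the first step fixes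
   which case occurs, and [F (i+2) = F i <-> G (i+2) = G i] propagates it. *)
Lemma walks_same_levels (F G : nat -> nat) (N : nat) :
  1 < N -> unit_steps F N -> unit_steps G N ->
  (forall i j, i < N -> j < N -> (F i = F j <-> G i = G j)) ->
  (forall i, i < N -> G i + F 0 = F i + G 0) \/
  (forall i, i < N -> G i + F i = G 0 + F 0).
Proof.
move=> hN hF hG hFG.
have [hF0 hG0] := (hF 0 hN, hG 0 hN).
have local_step i : i.+2 < N ->
    [/\ F i.+1 = F i + 1 \/ F i = F i.+1 + 1, G i.+1 = G i + 1 \/ G i = G i.+1 + 1,
        F i.+2 = F i.+1 + 1 \/ F i.+1 = F i.+2 + 1,
        G i.+2 = G i.+1 + 1 \/ G i.+1 = G i.+2 + 1
      & F i.+2 = F i <-> G i.+2 = G i].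
  move=> hi; split; [exact: hF (ltnW hi) | exact: hG (ltnW hi) |
                     exact: hF | exact: hG | exact: hFG (ltnW (ltnW hi))].
case: (boolP (G 1 + F 0 == F 1 + G 0)) => /eqP h01; [left|right];
  apply: ind2_below; try lia;
  by move=> i /local_step[]; lia.
Qed.

Lemma walk_ivt_from (F : nat -> nat) (N : nat) : unit_steps F N ->
  forall d i y, i + d < N ->
  (F i <= y <= F (i + d)) \/ (F (i + d) <= y <= F i) -> exists2 k, k < N & F k = y.
Proof.
move=> hF; elim=> [|d IH] i y hid hy.
  by exists i; rewrite addn0 in hid hy; lia.
case: (boolP ((F i <= y <= F (i + d)) || (F (i + d) <= y <= F i))) => [/orP h|h].
  by apply: (IH i y) => //; lia.
exists (i + d.+1) => //.
have := hF (i + d); rewrite -addnS => /(_ hid).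
by move: h hy; rewrite addnS; lia.
Qed.

Lemma walk_ivt (F : nat -> nat) (N : nat) : unit_steps F N ->
  forall i j y, i < N -> j < N -> F i <= y <= F j -> exists2 k, k < N & F k = y.
Proof.
move=> hF i j y hi hj hy; case: (leqP i j) => hij.
- have := walk_ivt_from hF (d := j - i) (i := i) (y := y).
  by rewrite subnKC //; apply=> //; left.
- have := walk_ivt_from hF (d := i - j) (i := j) (y := y).
  by rewrite subnKC ?(ltnW hij) //; apply=> //; right.
Qed.

Section PathHomomorphisms.
Variables (n r : nat).
Implicit Types f g : {ffun 'I_n.+1 -> 'I_r}.

Definition walk f (i : nat) : nat := val (f (inord i)).

Lemma walkE f (x : 'I_n.+1) : walk f x = val (f x).
Proof. by rewrite /walk inord_val. Qed.

Lemma homP f : is_hom f <-> unit_steps (walk f) n.+1.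
Proof.
split=> [/forallP hf i hi | hf].
  have /forallP /(_ (inord i.+1)) /implyP := hf (inord i).
  rewrite /walk /= !inordK //; last exact: ltnW.
  case: (f (inord i)) => a ha; case: (f (inord i.+1)) => b hb /=.
  by move=> /(_ (eqxx _)) /orP[] /eqP; lia.
apply/forallP => -[i hi]; apply/forallP => -[j hj]; apply/implyP => /eqP /= hij.
subst j; have := hf _ hj.
rewrite (walkE f (Ordinal hi)) (walkE f (Ordinal hj)).
case: (f (Ordinal hi)) => a ha; case: (f (Ordinal hj)) => b hb /=.
by case=> h; apply/orP; [left|right]; apply/eqP; lia.
Qed.

Lemma EpiP f : f \in Epi n.+1 r <-> is_hom f /\ forall v : 'I_r, exists x, f x = v.
Proof.
rewrite !inE; split=> [/andP[hf /eqP him] | [hf hs]].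
  split=> // v; have : v \in f @: [set: 'I_n.+1] by rewrite him inE.
  by case/imsetP => x _ ->; exists x.
rewrite hf; apply/eqP/setP => v; rewrite inE.
by have [x <-] := hs v; rewrite imset_f.
Qed.

Definition reflect_map g : {ffun 'I_n.+1 -> 'I_r} := [ffun i => rev_ord (g i)].

Lemma reflect_map_epi g : g \in Epi n.+1 r -> reflect_map g \in Epi n.+1 r.
Proof.
case/EpiP => /homP hg hs; apply/EpiP; split.
  apply/homP => i hi; have := hg i hi; rewrite /walk !ffunE.
  by case: (g (inord i)) => a ha; case: (g (inord i.+1)) => b hb /=; lia.
move=> v; have [x hx] := hs (rev_ord v).
by exists x; rewrite ffunE hx rev_ordK.
Qed.

(* Since an epimorphism hits 0 and r >= 2, the reflection has no fixed point. *)
Lemma reflect_map_neq g : 1 < r -> g \in Epi n.+1 r -> reflect_map g != g.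
Proof.
move=> hr /EpiP[_ hs]; have [x hx] := hs (Ordinal (ltnW hr)).
apply/eqP => /(congr1 (fun h : {ffun 'I_n.+1 -> 'I_r} => val (h x))).
by rewrite ffunE hx /=; lia.
Qed.

End PathHomomorphisms.

Definition fiber_partition (n : nat) (T : finType) (f : {ffun 'I_n -> T}) :
  {set {set 'I_n}} := preim_partition f [set: 'I_n].

Lemma fiber_partitionP (n : nat) (T1 T2 : finType)
    (f : {ffun 'I_n -> T1}) (g : {ffun 'I_n -> T2}) :
  fiber_partition f = fiber_partition g <-> forall x y, (f x == f y) = (g x == g y).
Proof.
split=> [e x y | h]; last first.
  apply: eq_imset => x; apply/setP => y; by rewrite !inE h.
have : [set y in [set: 'I_n] | f x == f y] \in fiber_partition g.
  by rewrite -e imset_f ?inE.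
case/imsetP => z _ hz.
have hx : x \in [set y in [set: 'I_n] | f x == f y] by rewrite !inE eqxx.
rewrite hz !inE /= in hx.
have : (y \in [set y in [set: 'I_n] | f x == f y]) =
       (y \in [set y in [set: 'I_n] | g z == g y]) by rewrite hz.
by rewrite !inE /= (eqP hx).
Qed.

Lemma card_fiber_partition (n : nat) (T : finType) (f : {ffun 'I_n -> T}) :
  #|fiber_partition f| = #|f @: [set: 'I_n]|.
Proof.
rewrite /fiber_partition /preim_partition /equivalence_partition.
have -> : [set [set y in [set: 'I_n] | f x == f y] | x in [set: 'I_n]] =
          (fun v => [set y in [set: 'I_n] | v == f y]) @: (f @: [set: 'I_n]).
  by rewrite -imset_comp.
apply: card_in_imset => v w /imsetP[x _ ->] _ hvw.
have : x \in [set y in [set: 'I_n] | f x == f y] by rewrite !inE eqxx.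
by rewrite hvw !inE => /eqP.
Qed.

(* Two epimorphisms onto P_r with the same kernel are equal or reflections
   of each other: by [walks_same_levels] they are translates or mirror
   images, and both reach the values 0 and r - 1. *)
Lemma epi_same_kernel (n r : nat) (g g' : {ffun 'I_n.+2 -> 'I_r.+2}) :
  g \in Epi n.+2 r.+2 -> g' \in Epi n.+2 r.+2 ->
  (forall x y, (g x == g y) = (g' x == g' y)) -> g' = g \/ g' = reflect_map g.
Proof.
move=> /EpiP[/homP hg sg] /EpiP[/homP hg' sg'] same.
have levels i j : i < n.+2 -> j < n.+2 -> (walk g i = walk g j <-> walk g' i = walk g' j).
  move=> _ _; rewrite /walk.
  have /= e := same (inord i) (inord j) : (val _ == val _) = (val _ == val _).
  by split=> /eqP h; apply/eqP; rewrite ?e // -e h.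
have [x0 hx0] := sg ord0; have [xr hxr] := sg ord_max.
have [y0 hy0] := sg' ord0.
have lt0 := ltn_ord (g' x0); have ltr := ltn_ord (g' xr).
case: (walks_same_levels (isT : 1 < n.+2) hg hg' levels) => [hA|hB]; [left|right];
  apply/ffunP => x; apply/val_inj.
- have := hA _ (ltn_ord x0); have := hA _ (ltn_ord y0); have := hA _ (ltn_ord x).
  by rewrite !walkE hx0 hy0 /=; lia.
- have := hB _ (ltn_ord x0); have := hB _ (ltn_ord xr); have := hB _ (ltn_ord x).
  by rewrite !walkE ffunE hx0 hxr /=; lia.
Qed.

Lemma hom_image_interval (n : nat) (f : {ffun 'I_n.+1 -> 'I_n.+1}) : is_hom f ->
  exists a, forall v, (exists x, val (f x) = v) <-> a <= v < a + #|f @: [set: 'I_n.+1]|.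
Proof.
move=> /homP hf.
have [ia _ min_ia] := @arg_minnP _ ord0 xpredT (fun i => val (f i)) isT.
have [ib _ max_ib] := @arg_maxnP _ ord0 xpredT (fun i => val (f i)) isT.
set a := val (f ia) in min_ia *; set b := val (f ib) in max_ib *.
have bounds x : a <= val (f x) <= b by apply/andP; split; [exact: min_ia | exact: max_ib].
have image_ab v : (exists x, val (f x) = v) <-> a <= v <= b.
  split=> [[x <-] | hv]; first exact: bounds.
  have hv' : walk f ia <= v <= walk f ib by rewrite !walkE.
  by have [k hk <-] := walk_ivt hf (ltn_ord ia) (ltn_ord ib) hv'; exists (inord k).
have card_ab : #|f @: [set: 'I_n.+1]| = b - a + 1.
  rewrite cardE -(size_map val) -(size_iota a (b - a + 1)).
  apply/perm_size/uniq_perm; first by rewrite (map_inj_uniq val_inj) enum_uniq.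
    exact: iota_uniq.
  move=> v; rewrite mem_iota; apply/mapP/idP.
  - case=> y; rewrite mem_enum => /imsetP[x _ ->] ->.
    by move: (bounds x) => /=; lia.
  - move=> hv; have [|x hx] := (image_ab v).2; first by have := bounds ib; lia.
    by exists (f x); rewrite ?mem_enum ?imset_f.
by exists a => v; rewrite image_ab card_ab; have := bounds ib; lia.
Qed.

Lemma hom_to_epi (n r : nat) (f : {ffun 'I_n.+1 -> 'I_n.+1}) :
  is_hom f -> #|f @: [set: 'I_n.+1]| = r ->
  exists2 g : {ffun 'I_n.+1 -> 'I_r},
    g \in Epi n.+1 r & fiber_partition g = fiber_partition f.
Proof.
move=> hf hc; have [a image] := hom_image_interval hf; rewrite hc in image.
have range x : a <= val (f x) < a + r by apply/image; exists x.
have shift_lt x : val (f x) - a < r by have := range x; lia.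
pose g : {ffun 'I_n.+1 -> 'I_r} := [ffun x => Ordinal (shift_lt x)].
have gE x : val (g x) = val (f x) - a by rewrite ffunE.
exists g.
- apply/EpiP; split.
    apply/homP => i hi; have := (homP f).1 hf i hi; rewrite /walk !gE.
    by have := range (inord i); have := range (inord i.+1); lia.
  move=> v; have [|x fx] := (image (a + v)).2; first by have := ltn_ord v; lia.
  by exists x; apply/val_inj; rewrite gE fx addKn.
- apply/fiber_partitionP => x y; rewrite -!val_eqE /= !gE.
  by have := range x; have := range y; move=> /= hx hy; apply/eqP/eqP; lia.
Qed.

(* An epimorphism onto P_r, followed by the inclusion of P_r into P_n, is an
   endomorphism of P_n; its partition therefore lies in C(P_n), with r blocks. *)
Lemma epi_partition_in_CP (n r : nat) (g : {ffun 'I_n.+1 -> 'I_r}) :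
  r <= n.+1 -> g \in Epi n.+1 r ->
  fiber_partition g \in CP n.+1 /\ #|fiber_partition g| = r.
Proof.
move=> hrn hg; have [/homP hom_g _] := (EpiP g).1 hg; split.
- apply/imsetP; exists [ffun x => widen_ord hrn (g x)].
    by rewrite inE; apply/homP => i hi; have := hom_g i hi; rewrite /walk !ffunE.
  by apply/fiber_partitionP => x y; rewrite !ffunE.
- rewrite card_fiber_partition; move: hg; rewrite !inE => /andP[_ /eqP ->].
  by rewrite cardsT card_ord.
Qed.

Lemma card_two_to_one (T U : finType) (E : {set T}) (s : T -> T) (phi : T -> U) :
  {in E, forall x, [/\ s x \in E, s x != x & phi (s x) = phi x]} ->
  {in E &, forall x y, phi x = phi y -> y = x \/ y = s x} ->
  2 * #|phi @: E| = #|E|.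
Proof.
move=> hs fibers.
rewrite -[RHS]sum1_card (partition_big_imset phi) mulnC -sum_nat_const /=.
apply: eq_bigr => _ /imsetP[x hx ->]; have [sxE sx_neq phi_sx] := hs x hx.
have E_fiber : [set y in E | phi y == phi x] = [set x; s x].
  apply/setP => y; rewrite !inE; apply/andP/orP => [[hy /eqP e] | [] /eqP ->].
  - by case: (fibers x y hx hy (esym e)) => ->; [left | right].
  - by rewrite hx.
  - by rewrite sxE phi_sx.
by rewrite sum1dep_card E_fiber cards2 eq_sym sx_neq.
Qed.

(* The theorem for 2 <= r <= n, written with n + 2 and r + 2: the fiber
   partition map sends Epi(P_n, P_r) two-to-one onto the partitions of C(P_n)
   with r blocks. *)
Lemma double_count_partitions (n r : nat) : r <= n ->
  2 * #|[set rho in CP n.+2 | #|rho| == r.+2]| = #|Epi n.+2 r.+2|.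
Proof.
move=> hrn; have hrn' : r.+2 <= n.+2 by [].
have -> : [set rho in CP n.+2 | #|rho| == r.+2] =
          (fun g => fiber_partition g) @: Epi n.+2 r.+2.
  apply/setP => rho; rewrite inE; apply/andP/imsetP.
  - case=> /imsetP[f]; rewrite inE => hf -> /eqP hc.
    rewrite [#|_|]card_fiber_partition in hc.
    by have [g hg e] := hom_to_epi hf hc; exists g.
  - by case=> g hg ->; have [-> ->] := epi_partition_in_CP hrn' hg.
apply: (card_two_to_one (s := @reflect_map n.+1 r.+2))
  => [g hg | g g' hg hg' /fiber_partitionP same].
- split; [exact: reflect_map_epi | exact: reflect_map_neq |].
  by apply/fiber_partitionP => x y; rewrite !ffunE (inj_eq rev_ord_inj).
- exact: epi_same_kernel.
Qed.

Theorem mainTheorem8 (n k : nat) (hk1 : 1 <= k) (hkn : k <= n - 1) :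
  2 * l k n = #|Epi n (n - k + 1)|.
Proof.
case: n hkn => [|[|m]] hkn; [lia | lia |].
rewrite /l; have -> : m.+2 - k + 1 = (m.+1 - k).+2 by lia.
by apply: double_count_partitions; lia.
Qed.
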